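(* Let $\hat{x}$ be the final value of the vector $x$ in Algorithm 1 and let $OPT$ be a set maximizing $f$ among subsets of $N$ of size at most $k$. If $\|\hat{x}\|_1<k$, then $F(\hat{x}+\mathbf{1}_{OPT\setminus\mathrm{supp}(\hat{x})})\ge(1-p)\cdot\big[p\cdot f(OPT)+(1-p)\cdot f(OPT\setminus\mathrm{supp}(\hat{x}))\big]$.
   Context: Setting: finite ground set $N$ whose elements arrive one at a time in a stream, non-negative submodular $f\colon 2^N\to\mathbb{R}_{\ge 0}$, positive integer $k$. $\mathbf{1}_A$ is the characteristic vector of $A$. $F$ is the multilinear extension of $f$: $F(x)=\sum_{A\subseteq N} f(A)\prod_{u\in A}x_u\prod_{u\notin A}(1-x_u)$ for $x\in[0,1]^N$, and $\partial_uF(x)=F(x\vee \mathbf{1}_u)-F(x\wedge\mathbf{1}_{N\setminus\{u\}})$ (coordinatewise max/min). $\mathrm{supp}(x)=\{u: x_u>0\}$. Algorithm 1 has parameters $p\in(0,1)$, $c>0$, $\alpha\in(0,1]$ and a number $\tau$. It starts with $x=\mathbf{0}$, and when an element $u$ arrives, if $\partial_uF(x)\ge c\tau/k$ it sets $x\leftarrow x+\min\{p,\,k-\|x\|_1\}\cdot\mathbf{1}_u$ (otherwise $x$ is unchanged). After the stream ends, it computes a random set $S_1$ with $|S_1|\le k$ and $\mathbb{E}[f(S_1)]\ge F(x)$, and a random set $S_2\subseteq\mathrm{supp}(x)$ with $|S_2|\le k$ and $\mathbb{E}[f(S_2)]\ge\alpha\cdot\max_{S\subseteq\mathrm{supp}(x),|S|\le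 k}f(S)$, and outputs the better of $S_1,S_2$. *)

From mathcomp Require Import all_boot all_order all_algebra.
Set Implicit Arguments. Unset Strict Implicit. Unset Printing Implicit Defensive.
Import Order.TTheory GRing.Theory Num.Theory.
Local Open Scope ring_scope.

Section Defs.
Variables (R : realFieldType) (T : finType).

Definition nonneg_setfun (f : {set T} -> R) := forall A, 0 <= f A.
Definition submodular (f : {set T} -> R) :=
  forall A B : {set T}, f (A :|: B) + f (A :&: B) <= f A + f B.

Definition indic (A : {set T}) : T -> R := fun u => if u \in A then 1 else 0.

Definition multilin (f : {set T} -> R) (x : T -> R) : R :=
  \sum_(A : {set T}) f A * (\prod_(u in A) x u) * (\prod_(u in ~: A) (1 - x u)).

Definition pderiv (f : {set T} -> R) (x : T -> R) (u : T) : R :=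
  multilin f (fun v => Num.max (x v) (indic [set u] v))
  - multilin f (fun v => Num.min (x v) (indic (~: [set u]) v)).

Definition norm1 (x : T -> R) : R := \sum_(u : T) `|x u|.
Definition supp (x : T -> R) : {set T} := [set u | 0 < x u].

Definition vadd (x y : T -> R) : T -> R := fun u => x u + y u.

Definition alg1_step (f : {set T} -> R) (k : nat) (p c tau : R)
    (x : T -> R) (u : T) : T -> R :=
  if c * tau / k%:R <= pderiv f x u
  then vadd x (fun v => Num.min p (k%:R - norm1 x) * indic [set u] v)
  else x.

Definition alg1_x (f : {set T} -> R) (k : nat) (p c tau : R) (s : seq T)
  : T -> R := foldl (alg1_step f k p c tau) (fun _ => 0) s.

End Defs.

(* Since the run ends strictly below the budget, every accepted element received exactly [p],
   so [xh = p * 1_S] with [S = supp xh].  Hence [F (xh + 1_(OPT :\: S))] is the expectation of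
   [f (A :|: Z)], where [A = OPT :\: S] and [Z] is a [p]-random subset of [S].  For submodular
   [g], the expectation over a [p]-random subset of [s] lies above the chord
   [(1 - p) g set0 + p g s].  Splitting [S] into [B = OPT :&: S] and [S :\: B], the chord bound
   on [B] followed by the same bound (dropping its nonnegative [p]-term) on [S :\: B] gives
   [p (1 - p) f (A :|: B) + (1 - p)^2 f A], and [A :|: B = OPT]. *)

From mathcomp Require Import all_boot all_order all_algebra.
From mathcomp Require Import ring lra.
Set Implicit Arguments. Unset Strict Implicit. Unset Printing Implicit Defensive.
Import Order.TTheory GRing.Theory Num.Theory.
Local Open Scope ring_scope.

Section RandomSubset.
Variables (R : realFieldType) (T : finType) (p : R).
Hypothesis p01 : 0 <= p <= 1.

(* [Erand s g] is the expectation of [g Z] for the random subset [Z] of [s]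
   containing each item independently with probability [p]. *)
Fixpoint Erand (s : seq T) (g : {set T} -> R) : R :=
  if s is u :: s' then p * Erand s' (fun Z => g (u |: Z)) + (1 - p) * Erand s' g
  else g set0.

Lemma eq_Erand s g h : g =1 h -> Erand s g = Erand s h.
Proof.
elim: s g h => [|u s IHs] g h gh /=; first exact: gh.
by rewrite (IHs g h) // (IHs _ (fun Z => h (u |: Z))).
Qed.

Lemma ler_Erand s g h : (forall Z, g Z <= h Z) -> Erand s g <= Erand s h.
Proof.
have /andP[p0 p1] := p01.
elim: s g h => [|u s IHs] g h gh /=; first exact: gh.
by rewrite lerD // ler_wpM2l ?subr_ge0 ?IHs.
Qed.

Lemma ErandD s g h : Erand s (fun Z => g Z + h Z) = Erand s g + Erand s h.
Proof.
elim: s g h => [|u s IHs] g h //=.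
rewrite (IHs (fun Z => g (u |: Z))) IHs; ring.
Qed.

Lemma Erand_cat s1 s2 g :
  Erand (s1 ++ s2) g = Erand s1 (fun Z => Erand s2 (fun W => g (Z :|: W))).
Proof.
elim: s1 g => [|u s1 IHs] g /=; first by apply: eq_Erand => W; rewrite set0U.
rewrite !IHs; congr (_ * _ + _ * _); apply: eq_Erand => Z.
by apply: eq_Erand => W; rewrite setUA.
Qed.

Lemma submodular_setU (g : {set T} -> R) B :
  submodular g -> submodular (fun W => g (B :|: W)).
Proof. by move=> gsub X Y; rewrite /= setUUr setUIr; apply: gsub. Qed.

Lemma submodular_Erand s (g : {set T} -> R) :
  submodular g -> submodular (fun Z => Erand s (fun W => g (Z :|: W))).
Proof.
move=> gsub X Y; rewrite /= -!ErandD; apply: ler_Erand => W.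
by rewrite setUUl setUIl; apply: gsub.
Qed.

Lemma Erand_ge_chord s (g : {set T} -> R) : submodular g -> uniq s ->
  (1 - p) * g set0 + p * g [set:: s] <= Erand s g.
Proof.
have /andP[p0 p1] := p01; have q0 : 0 <= 1 - p by rewrite subr_ge0.
elim: s g => [|u s IHs] g gsub /=; first by rewrite set_nil -mulrDl subrK mul1r.
case/andP=> us suniq.
have le_with_u := IHs _ (submodular_setU [set u] gsub) suniq.
have le_without_u := IHs _ gsub suniq.
have sub_u := gsub [set u] [set:: s].
rewrite /= setU0 -set_cons in le_with_u.
rewrite -set_cons disjoint_setI0 ?disjoints1 ?inE // in sub_u.
have := ler_wpM2l p0 le_with_u; have := ler_wpM2l q0 le_without_u.
have := ler_wpM2l (mulr_ge0 p0 q0) sub_u.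
move: (Erand s g) (Erand s (fun Z => g (u |: Z))) => a b; nra.
Qed.

Lemma Erand_ge_set0 s (g : {set T} -> R) : nonneg_setfun g -> submodular g -> uniq s ->
  (1 - p) * g set0 <= Erand s g.
Proof.
move=> g0 gsub suniq; apply: le_trans (Erand_ge_chord gsub suniq).
have /andP[p0 _] := p01; by rewrite lerDl mulr_ge0.
Qed.

Lemma Erand_cat_ge s1 s2 (g : {set T} -> R) :
  nonneg_setfun g -> submodular g -> uniq (s1 ++ s2) ->
  p * (1 - p) * g [set:: s1] + (1 - p) ^+ 2 * g set0 <= Erand (s1 ++ s2) g.
Proof.
have /andP[p0 p1] := p01; have q0 : 0 <= 1 - p by rewrite subr_ge0.
move=> g0 gsub; rewrite cat_uniq => /and3P[uniq1 _ uniq2].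
rewrite Erand_cat; apply: le_trans (Erand_ge_chord (submodular_Erand s2 gsub) uniq1).
have Erand_ge (Z : {set T}) : (1 - p) * g Z <= Erand s2 (fun W => g (Z :|: W)).
  rewrite -{1}[Z]setU0; apply: Erand_ge_set0 uniq2 => [W|]; first exact: g0.
  exact: submodular_setU.
have := ler_wpM2l p0 (Erand_ge [set:: s1]); have := ler_wpM2l q0 (Erand_ge set0).
move: (Erand s2 _) (Erand s2 _) => a b; nra.
Qed.

End RandomSubset.

Section MultilinearExtension.
Variables (R : realFieldType) (T : finType) (f : {set T} -> R).

Lemma prod_in_notin (y : T -> R) (X : {set T}) :
  \prod_(v in X) y v * \prod_(v in ~: X) (1 - y v)
  = \prod_v (if v \in X then y v else 1 - y v).
Proof.
rewrite [RHS](bigID (mem X)) /=; congr (_ * _).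
  by apply: eq_bigr => v ->.
by apply: eq_big => [v|v]; rewrite inE // => /negbTE ->.
Qed.

Lemma multilin_coordE (x : T -> R) u :
  multilin f x = x u * multilin f [eta x with u |-> 1]
               + (1 - x u) * multilin f [eta x with u |-> 0].
Proof.
rewrite /multilin !mulr_sumr -big_split; apply: eq_bigr => X _.
have split_u (y : T -> R) : \prod_v (if v \in X then y v else 1 - y v)
    = (if u \in X then y u else 1 - y u)
      * \prod_(v | v != u) (if v \in X then y v else 1 - y v).
  by rewrite (bigD1 u).
rewrite -!mulrA !prod_in_notin !split_u /= eqxx.
have other_coords a : let y := [eta x with u |-> a] in
    \prod_(v | v != u) (if v \in X then y v else 1 - y v)
    = \prod_(v | v != u) (if v \in X then x v else 1 - x v).
  by apply: eq_bigr => v /negbTE /= ->.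
rewrite !other_coords; case: (u \in X); ring.
Qed.

Lemma multilin_indic (x : T -> R) (A : {set T}) :
  x =1 indic R A -> multilin f x = f A.
Proof.
rewrite /indic => xA.
rewrite /multilin (bigD1 A) //= [X in _ + X]big1 => [|X XA].
  rewrite big1 => [|v vA]; last by rewrite xA vA.
  rewrite big1 => [|v]; last by rewrite inE xA => /negbTE ->; rewrite subr0.
  by rewrite addr0 !mulr1.
have [sXA|/subsetPn[v vX vA]] := boolP (X \subset A); last first.
  by rewrite (bigD1 v vX) /= xA (negbTE vA) mul0r mulr0 mul0r.
have /subsetPn[v vA vX] : ~~ (A \subset X) by apply: contra XA => sAX; rewrite eqEsubset sXA.
by rewrite [X in _ * X](bigD1 v) ?inE //= xA vA subrr mul0r mulr0.
Qed.

Lemma multilin_Erand p (s : seq T) (A : {set T}) (x : T -> R) :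
  uniq s -> (forall v, v \in s -> v \notin A) ->
  (forall v, x v = if v \in s then p else indic R A v) ->
  multilin f x = Erand p s (fun Z => f (A :|: Z)).
Proof.
elim: s A x => [|u s IHs] A x /=.
  by move=> _ _ xA; rewrite setU0; apply: multilin_indic => v; rewrite xA.
case/andP=> us suniq sA xE.
have uA : u \notin A := sA u (mem_head u s).
have sA' v : v \in s -> v \notin A by move=> vs; apply: sA; rewrite inE vs orbT.
rewrite (multilin_coordE x u) xE mem_head; congr (p * _ + _).
  rewrite (IHs (u |: A)) // => [|v vs|v].
  - by apply: eq_Erand => Z; rewrite setUCA setUA.
  - by rewrite !inE negb_or sA' // andbT; apply: contraNneq us => <-.
  by rewrite /= xE inE /indic !inE; case: eqVneq => [->|]; rewrite ?(negbTE us).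
rewrite (IHs A) // => v; rewrite /= xE inE /indic.
by case: eqVneq => [->|]; rewrite ?(negbTE us) ?(negbTE uA).
Qed.

End MultilinearExtension.

Section Algorithm.
Variables (R : realFieldType) (T : finType) (f : {set T} -> R) (k : nat) (p c tau : R).
Hypothesis p_gt0 : 0 < p.

Local Notation step := (alg1_step f k p c tau).

Definition increment (x : T -> R) (u : T) : R :=
  if c * tau / k%:R <= pderiv f x u then Num.min p (k%:R - norm1 x) else 0.

Definition admissible (x : T -> R) := (forall v, 0 <= x v) /\ norm1 x <= k%:R.

Lemma alg1_stepE x u v : step x u v = x v + increment x u * indic R [set u] v.
Proof. by rewrite /alg1_step /increment /vadd; case: ifP; rewrite ?mul0r ?addr0. Qed.

Lemma indic_ge0 (A : {set T}) v : 0 <= indic R A v.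
Proof. by rewrite /indic; case: ifP. Qed.

Lemma increment_ge0 x u : norm1 x <= k%:R -> 0 <= increment x u.
Proof.
rewrite /increment -subr_ge0 => norm_le; case: ifP => // _.
by rewrite le_min (ltW p_gt0).
Qed.

Lemma norm1_step x u : admissible x -> norm1 (step x u) = norm1 x + increment x u.
Proof.
move=> [x_ge0 norm_le]; have inc_ge0 := increment_ge0 u norm_le.
rewrite /norm1.
under eq_bigr => v _ do
  rewrite alg1_stepE ger0_norm ?addr_ge0 ?mulr_ge0 ?indic_ge0 //.
rewrite big_split /=; congr (_ + _); first by apply: eq_bigr => v _; rewrite ger0_norm.
rewrite (bigD1 u) //= big1 => [|v /negbTE vu]; first by rewrite /indic inE eqxx mulr1 addr0.
by rewrite /indic inE vu mulr0.
Qed.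

Lemma admissible_step x u : admissible x -> admissible (step x u).
Proof.
move=> adm; have [x_ge0 norm_le] := adm; split.
  by move=> v; rewrite alg1_stepE addr_ge0 ?mulr_ge0 ?indic_ge0 ?increment_ge0.
rewrite norm1_step // /increment; case: ifP => _; last by rewrite addr0.
by rewrite -lerBrDl ge_min lexx orbT.
Qed.

Lemma norm1_foldl_ge t x : admissible x -> norm1 x <= norm1 (foldl step x t).
Proof.
elim: t x => [|u t IHt] x adm //=.
apply: le_trans (IHt _ (admissible_step u adm)).
by rewrite norm1_step // lerDl increment_ge0 //; case: adm.
Qed.

(* Otherwise the increment is [k - norm1 x] and the step reaches [norm1 = k]. *)
Lemma increment_0p x u : admissible x -> norm1 (step x u) < k%:R ->
  increment x u = 0 \/ increment x u = p.
Proof.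
move=> adm; rewrite norm1_step // /increment; case: ifP => _; [|by left].
by rewrite /Num.min; case: ifP => _; [right | rewrite addrC subrK ltxx].
Qed.

Lemma foldl_step_0p t x : uniq t -> admissible x -> {in t, forall v, x v = 0} ->
  (forall v, x v = 0 \/ x v = p) -> norm1 (foldl step x t) < k%:R ->
  forall v, foldl step x t v = 0 \/ foldl step x t v = p.
Proof.
elim: t x => [|u t IHt] x //= /andP[ut tuniq] adm x0 x0p final_lt.
have adm' := admissible_step u adm.
have inc0p : increment x u = 0 \/ increment x u = p.
  by apply: increment_0p adm (le_lt_trans (norm1_foldl_ge t adm') final_lt).
apply: IHt => // [v vt | v]; rewrite alg1_stepE /indic inE.
  have vu : v != u by apply: contraTneq vt => ->.
  by rewrite x0 ?inE ?vt ?orbT // (negbTE vu) mulr0 addr0.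
case: eqVneq => [->|_]; last by rewrite mulr0 addr0.
by rewrite mulr1 x0 ?mem_head // add0r.
Qed.

Lemma alg1_xE s : uniq s -> norm1 (alg1_x f k p c tau s) < k%:R ->
  forall v, alg1_x f k p c tau s v = if v \in supp (alg1_x f k p c tau s) then p else 0.
Proof.
move=> suniq final_lt v.
have x0 : admissible (fun _ : T => 0 : R).
  by split=> //; rewrite /norm1 big1 // => v' _; rewrite normr0.
have := foldl_step_0p suniq x0 (fun _ _ => erefl) (fun _ => or_introl erefl) final_lt v.
by rewrite /alg1_x inE; case=> ->; rewrite ?ltxx ?p_gt0.
Qed.

End Algorithm.

Theorem lemma3p4 (R : realFieldType) (T : finType) (f : {set T} -> R)
  (k : nat) (p c tau : R) (s : seq T) (OPT : {set T}) :
  nonneg_setfun f -> submodular f -> (0 < k)%N ->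
  0 < p < 1 -> 0 < c ->
  perm_eq s (enum T) ->
  (#|OPT| <= k)%N -> (forall S : {set T}, (#|S| <= k)%N -> f S <= f OPT) ->
  let xh := alg1_x f k p c tau s in
  norm1 xh < k%:R ->
  multilin f (vadd xh (@indic R T (OPT :\: supp xh)))
    >= (1 - p) * (p * f OPT + (1 - p) * f (OPT :\: supp xh)).
Proof.
move=> f_ge0 f_sub _ /andP[p_gt0 p_lt1] _ s_perm _ _ xh final_lt.
have p01 : 0 <= p <= 1 by rewrite !ltW.
have xhE := alg1_xE p_gt0 (etrans (perm_uniq s_perm) (enum_uniq T)) final_lt.
rewrite -/xh in xhE; set S := supp xh in xhE *; clearbody S.
set A := OPT :\: S; set B := OPT :&: S; set l := enum B ++ enum (S :\: B).
have l_uniq : uniq l.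
  rewrite cat_uniq !enum_uniq /= andbT; apply/hasPn => v.
  by rewrite !mem_enum !inE => /andP[/negbTE -> _].
have mem_l v : (v \in l) = (v \in S).
  by rewrite mem_cat !mem_enum !inE; case: (v \in OPT); case: (v \in S).
have l_disj v : v \in l -> v \notin A by rewrite mem_l inE negb_and negbK => ->.
have point_at v : vadd xh (indic R A) v = if v \in l then p else indic R A v.
  by rewrite /vadd xhE mem_l /indic inE; case: (v \in S); rewrite ?addr0 ?add0r.
rewrite (multilin_Erand f l_uniq l_disj point_at).
apply: le_trans (Erand_cat_ge p01 (fun Z => f_ge0 _) (submodular_setU A f_sub) l_uniq).
rewrite set_enum setU0 setUC setID; nra.
Qed.
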